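(* Let $\mu$ be a cardinal with $\aleph_0<\kappa=\mathrm{cf}(\mu)<\mu$, $\lambda=\mu^+$, and let $\mu=\sum_{i<\kappa}\mu_i$ where $\langle\mu_i:i<\kappa\rangle$ is an increasing continuous sequence of cardinals with $\mu_0>\kappa$. Then there is a sequence $\langle a^\alpha_i: i<\kappa,\alpha<\lambda\rangle$ such that for every $\alpha<\lambda$ the sets $a^\alpha_i$ ($i<\kappa$) are subsets of $\alpha$, $\subseteq$-increasing in $i$, with $|a^\alpha_i|\le\mu_i$, and such that for every function $f:\lambda\to\lambda$, letting $A^f_i=\{\alpha<\lambda:\alpha=\sup\{\zeta\in a^\alpha_i: f(\zeta)\in a^\alpha_i\}\}$, we have: (A) the sets $A^f_i$ are $\subseteq$-increasing in $i$; (B) $\{\delta<\lambda:\mathrm{cf}(\delta)\ne\kappa\}\setminus\bigcup_{i<\kappa}A^f_i$ is non-stationary in $\lambda$; (C) if $\gamma<\lambda$ with $\aleph_0<\mathrm{cf}(\gamma)\le\kappa$ (in particular if $\mathrm{cf}(\gamma)=\kappa$), $i<\kappa$, and $A^f_i$ reflects at $\gamma$, then $\gamma\in A^f_i$; (C') consequently, letting $S_f=S^\lambda_\kappa\setminus\bigcup_{i<\kappa}A^f_i$, for no $i<\kappa$ does $A^f_i$ reflect at any $\delta\in S_f$; (D) there is a non-stationary set $N\subseteq\lambda$ such that $S_f\setminus N\in{\cal I}[\lambda,\kappa)$.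
   Context: $S^\lambda_\kappa=\{\delta<\lambda:\mathrm{cf}(\delta)=\kappa\}$. A set $A\subseteq\lambda$ reflects at $\gamma<\lambda$ if $\mathrm{cf}(\gamma)>\aleph_0$ and $A\cap\gamma$ is stationary in $\gamma$. ${\cal I}[\lambda,\kappa)$ is the family of all $A\subseteq\lambda$ for which there is a function $h:\lambda\to\kappa$ such that for every $\delta\in A\cap S^\lambda_\kappa$ there is a club $C$ of $\delta$ with $h\restriction C$ strictly increasing. *)

(* Ordinals below lambda are modelled as the elements of an
   arbitrary type L carrying a strict well-order [lt]; sets are predicates. *)
From Stdlib Require Import Classical.

Set Implicit Arguments.

Section OrdDefs.
Variable L : Type.
Variable lt : L -> L -> Prop.

Definition le (x y : L) : Prop := lt x y \/ x = y.

Definition StrictWellOrder : Prop :=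
  (forall x, ~ lt x x) /\
  (forall x y z, lt x y -> lt y z -> lt x z) /\
  (forall x y, lt x y \/ x = y \/ lt y x) /\
  well_founded lt.

Definition below (x : L) : L -> Prop := fun y => lt y x.

Definition Subset (X Y : L -> Prop) : Prop := forall x, X x -> Y x.

Definition IsZero (z : L) : Prop := forall y, ~ lt y z.
Definition IsLimit (j : L) : Prop :=
  (exists y, lt y j) /\ forall y, lt y j -> exists w, lt y w /\ lt w j.

(* alpha = sup X  (least upper bound; sup of the empty set is 0) *)
Definition IsSup (a : L) (X : L -> Prop) : Prop :=
  (forall z, X z -> le z a) /\ (forall b, (forall z, X z -> le z b) -> le a b).

Definition CofMap (d e : L) : Prop :=
  exists g : L -> L, (forall x, lt x e -> lt (g x) d) /\
    (forall b, lt b d -> exists x, lt x e /\ le b (g x)).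
Definition IsCf (d e : L) : Prop :=
  CofMap d e /\ forall e', CofMap d e' -> le e e'.

Definition Uncountable (e : L) : Prop :=
  ~ exists g : L -> nat, forall x y, lt x e -> lt y e -> g x = g y -> x = y.

Definition UncountableCf (d : L) : Prop := exists e, IsCf d e /\ Uncountable e.

Definition ClosedUnboundedL (C : L -> Prop) : Prop :=
  (forall b, exists c, C c /\ lt b c) /\
  (forall d, IsLimit d -> (forall b, lt b d -> exists c, C c /\ lt b c /\ lt c d) -> C d).
Definition NonStationaryL (X : L -> Prop) : Prop :=
  exists C, ClosedUnboundedL C /\ forall x, C x -> ~ X x.

Definition ClubOf (g : L) (C : L -> Prop) : Prop :=
  (forall c, C c -> lt c g) /\
  (forall b, lt b g -> exists c, C c /\ lt b c) /\
  (forall d, lt d g -> IsLimit d ->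
      (forall b, lt b d -> exists c, C c /\ lt b c /\ lt c d) -> C d).
Definition StationaryIn (g : L) (X : L -> Prop) : Prop :=
  forall C, ClubOf g C -> exists x, C x /\ X x.

Definition Reflects (A : L -> Prop) (g : L) : Prop :=
  UncountableCf g /\ StationaryIn g (fun x => A x /\ lt x g).

Definition InI (k : L) (A : L -> Prop) : Prop :=
  exists h : L -> L, (forall x, lt (h x) k) /\
    forall d, A d -> IsCf d k ->
      exists C, ClubOf d C /\ forall x y, C x -> C y -> lt x y -> lt (h x) (h y).

End OrdDefs.

Definition CardLe (A B : Type) (X : A -> Prop) (Y : B -> Prop) : Prop :=
  exists g : A -> B, (forall x, X x -> Y (g x)) /\
    (forall x y, X x -> X y -> g x = g y -> x = y).
Definition CardEq (A B : Type) (X : A -> Prop) (Y : B -> Prop) : Prop :=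
  CardLe X Y /\ CardLe Y X.

Definition IsCard (L : Type) (lt : L -> L -> Prop) (x : L) : Prop :=
  forall y, lt y x -> ~ CardLe (below lt x) (below lt y).

(* Fix, for every g < lambda, an injection of g into mu = sum_i mu_i, and call the
   index of the summand containing the image of z < g its level; then at most mu_i
   elements of g have level <= i. Fix also in every g a ladder: a monotone cofinal
   map of length cf g. By well-founded recursion, a^g_i consists of the z < g of
   level <= i together with a^b_i for every accumulation point b of the ladder of g,
   provided cf g <= kappa. These accumulation points form a club of g of size
   <= kappa < mu_i, whence |a^g_i| <= mu_i, and a^b_i is contained in a^g_i along
   this club; so if A^f_i reflects at g, the points of A^f_i on the club witness
   g in A^f_i, which is (C).
   For (B), take d a limit closed under f: each z < d lies, together with f z, in
   some a^d_j. If cf d < kappa, regularity of kappa gives one j for a cofinal set of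
   z, so d is in A^f_j; if cf d > kappa and d is in no A^f_j, the sups beta_j of
   {z : z, f z in a^d_j} are bounded below d, which is impossible.
   For (D), let h z be the least i with z in A^f_i. At d in S_f that is a limit of
   f-closed points, beta_j < d is increasing in j, and h is strictly increasing on
   the club of f-closed ladder points z lying above beta (h z') for all such z' < z,
   because z in A^f_(h z) forces z <= beta (h z). *)

From Stdlib Require Import Classical ClassicalEpsilon FunctionalExtensionality PropExtensionality.
From Stdlib Require Import Arith Lia List.

Set Implicit Arguments.

Lemma partial_choice (A B : Type) (b0 : B) {P : A -> Prop} {R : A -> B -> Prop} :
  (forall x, P x -> exists y, R x y) -> exists f : A -> B, forall x, P x -> R x (f x).
Proof.
  intro H.
  assert (H' : forall x, exists y, P x -> R x y).
  { intro x. destruct (classic (P x)) as [Hp|Hp].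
    - destruct (H x Hp) as [y Hy]. exists y. auto.
    - exists b0. intro; contradiction. }
  exists (fun x => proj1_sig (constructive_indefinite_description _ (H' x))).
  intros x Hx. exact (proj2_sig (constructive_indefinite_description _ (H' x)) Hx).
Qed.

Lemma cardle_refl (A : Type) (X : A -> Prop) : CardLe X X.
Proof. exists (fun x => x). split; auto. Qed.

Lemma cardle_trans {A B C : Type} {X : A -> Prop} {Y : B -> Prop} {Z : C -> Prop} :
  CardLe X Y -> CardLe Y Z -> CardLe X Z.
Proof. intros [f [Hf1 Hf2]] [g [Hg1 Hg2]]. exists (fun x => g (f x)). split; auto. Qed.

Lemma cardle_subset {A B : Type} {X X' : A -> Prop} {Y Y' : B -> Prop} :
  (forall x, X x -> X' x) -> (forall y, Y' y -> Y y) -> CardLe X' Y' -> CardLe X Y.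
Proof. intros H1 H2 [f [Hf1 Hf2]]. exists f. split; auto. Qed.

Definition prodset (A B : Type) (X : A -> Prop) (Y : B -> Prop) : A * B -> Prop :=
  fun p => X (fst p) /\ Y (snd p).

Lemma cardle_prod {A A' B B' : Type} {X : A -> Prop} {X' : A' -> Prop}
    {Y : B -> Prop} {Y' : B' -> Prop} :
  CardLe X X' -> CardLe Y Y' -> CardLe (prodset X Y) (prodset X' Y').
Proof.
  intros [f [Hf1 Hf2]] [g [Hg1 Hg2]]. exists (fun p => (f (fst p), g (snd p))). split.
  - intros [a b] [Ha Hb]; split; simpl in *; auto.
  - intros [a b] [c d] [Ha Hb] [Hc Hd] E; simpl in *. inversion E. f_equal; auto.
Qed.

Lemma pigeonhole N (g : nat -> nat) : (forall n, (n < S N)%nat -> (g n < N)%nat) ->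
  ~ (forall a b, (a < S N)%nat -> (b < S N)%nat -> g a = g b -> a = b).
Proof.
  intros H1 H2.
  assert (ND : NoDup (map g (seq 0 (S N)))).
  { apply NoDup_map_NoDup_ForallPairs; [|apply seq_NoDup].
    intros a b Ha Hb. apply in_seq in Ha. apply in_seq in Hb. apply H2; lia. }
  assert (INC : incl (map g (seq 0 (S N))) (seq 0 N)).
  { intros x Hx. apply in_map_iff in Hx. destruct Hx as [a [<- Ha]].
    apply in_seq in Ha. apply in_seq. specialize (H1 a). lia. }
  pose proof (NoDup_incl_length ND INC) as Hl.
  rewrite length_map, !length_seq in Hl. lia.
Qed.

Lemma cardle_fin_square N :
  CardLe (prodset (fun j => (j < N)%nat) (fun j => (j < N)%nat)) (fun j => (j < N * N)%nat).
Proof.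
  exists (fun p => fst p * N + snd p)%nat. split.
  - intros [a b] [Ha Hb]; simpl in *. nia.
  - intros [a b] [c d] [Ha Hb] [Hc Hd] E; simpl in *.
    assert (a = c) by nia. subst. f_equal. lia.
Qed.

Section Ordinals.
Variable L : Type.
Variable lt : L -> L -> Prop.
Hypothesis wo : StrictWellOrder lt.

Local Notation "x <. y" := (lt x y) (at level 70).
Local Notation "x <=. y" := (le lt x y) (at level 70).

Lemma lt_irrefl x : ~ x <. x.
Proof. destruct wo as [H _]. apply H. Qed.
Lemma lt_trans x y z : x <. y -> y <. z -> x <. z.
Proof. destruct wo as [_ [H _]]. apply H. Qed.
Lemma lt_trichotomy x y : x <. y \/ x = y \/ y <. x.
Proof. destruct wo as [_ [_ [H _]]]. apply H. Qed.
Lemma lt_wf : well_founded lt.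
Proof. destruct wo as [_ [_ [_ H]]]. exact H. Qed.
Lemma le_refl x : x <=. x.
Proof. right; reflexivity. Qed.
Lemma lt_le_incl x y : x <. y -> x <=. y.
Proof. left; auto. Qed.
Lemma le_trans x y z : x <=. y -> y <=. z -> x <=. z.
Proof. intros [H|H] [H'|H']; subst; unfold le; eauto using lt_trans. Qed.
Lemma lt_le_trans x y z : x <. y -> y <=. z -> x <. z.
Proof. intros H [H'|H']; subst; eauto using lt_trans. Qed.
Lemma le_lt_trans x y z : x <=. y -> y <. z -> x <. z.
Proof. intros [H|H] H'; subst; eauto using lt_trans. Qed.
Lemma not_lt_le x y : ~ x <. y -> y <=. x.
Proof.
  intro H. destruct (lt_trichotomy x y) as [h|[h|h]]; [contradiction|right|left]; auto.
Qed.
Lemma le_not_lt x y : x <=. y -> ~ y <. x.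
Proof. intros H H'. apply (lt_irrefl (le_lt_trans H H')). Qed.
Lemma not_le_lt x y : ~ x <=. y -> y <. x.
Proof.
  intro H. destruct (lt_trichotomy x y) as [h|[h|h]]; auto; exfalso; apply H; [left|right]; auto.
Qed.
Lemma lt_not_le x y : x <. y -> ~ y <=. x.
Proof. intros H H'. exact (le_not_lt H' H). Qed.
Lemma le_antisym x y : x <=. y -> y <=. x -> x = y.
Proof. intros [H|H] H'; auto. exfalso; exact (le_not_lt H' H). Qed.

Lemma least_exists (P : L -> Prop) :
  (exists x, P x) -> exists x, P x /\ forall y, P y -> x <=. y.
Proof.
  intros [x Hx]. apply NNPP; intro Hn.
  assert (H : forall z, ~ P z).
  { intro z. induction z as [z IH] using (well_founded_induction lt_wf).
    intro Hz. apply Hn. exists z. split; auto. intros y Hy.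
    apply not_lt_le. intro Hyz. exact (IH y Hyz Hy). }
  exact (H x Hx).
Qed.

Definition omax (a b : L) : L := if excluded_middle_informative (a <. b) then b else a.

Lemma le_omax_l a b : a <=. omax a b.
Proof.
  unfold omax. destruct (excluded_middle_informative _); [apply lt_le_incl; auto|apply le_refl].
Qed.
Lemma le_omax_r a b : b <=. omax a b.
Proof.
  unfold omax. destruct (excluded_middle_informative _); [apply le_refl|apply not_lt_le; auto].
Qed.
Lemma omax_lub_lt a b c : a <. c -> b <. c -> omax a b <. c.
Proof. unfold omax. destruct (excluded_middle_informative _); auto. Qed.

Lemma sup_exists (X : L -> Prop) b : (forall z, X z -> z <=. b) -> exists s, IsSup lt s X.
Proof.
  intro Hb. destruct (@least_exists (fun s => forall z, X z -> z <=. s)) as [s [H1 H2]].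
  - exists b; auto.
  - exists s. split; auto.
Qed.

Lemma sup_least {s X b} : IsSup lt s X -> (forall z, X z -> z <=. b) -> s <=. b.
Proof. intros [_ H] Hb. auto. Qed.

Lemma sup_ub {s X z} : IsSup lt s X -> X z -> z <=. s.
Proof. intros [H _] Hz. auto. Qed.

Lemma lt_sup_witness {s X y} : IsSup lt s X -> y <. s -> exists z, X z /\ y <. z.
Proof.
  intros Hs Hy. apply NNPP; intro Hn.
  assert (H : s <=. y).
  { apply (sup_least Hs). intros z Hz. apply not_lt_le. intro. apply Hn; eauto. }
  exact (le_not_lt H Hy).
Qed.

Lemma sup_of_cofinal d (X : L -> Prop) : IsLimit lt d -> (forall z, X z -> z <. d) ->
  (forall b, b <. d -> exists z, X z /\ b <=. z) -> IsSup lt d X.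
Proof.
  intros [_ Hl] H1 H2. split.
  - intros z Hz. apply lt_le_incl; auto.
  - intros b Hb. apply not_lt_le. intro Hbd. destruct (Hl b Hbd) as [w [Hw1 Hw2]].
    destruct (H2 w Hw2) as [z [Hz1 Hz2]].
    exact (lt_not_le Hw1 (le_trans Hz2 (Hb z Hz1))).
Qed.

Lemma sup_lt_of_not_sup d (X : L -> Prop) : (forall z, X z -> z <. d) -> ~ IsSup lt d X ->
  exists s, IsSup lt s X /\ s <. d.
Proof.
  intros H1 H2. destruct (@sup_exists X d) as [s Hs].
  { intros; apply lt_le_incl; auto. }
  exists s. split; auto. destruct (sup_least Hs (b := d)) as [h|h]; auto.
  - intros; apply lt_le_incl; auto.
  - subst; contradiction.
Qed.


Variable l0 : L.

Definition least (d : L) (P : L -> Prop) : L :=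
  match excluded_middle_informative (exists x, P x /\ forall y, P y -> x <=. y) with
  | left H => proj1_sig (constructive_indefinite_description _ H)
  | right _ => d
  end.

Lemma least_spec d P : (exists x, P x) -> P (least d P) /\ forall y, P y -> least d P <=. y.
Proof.
  intro H. apply least_exists in H. unfold least.
  destruct (excluded_middle_informative _) as [H'|H']; [|contradiction].
  exact (proj2_sig (constructive_indefinite_description _ H')).
Qed.

Lemma least_default d P : ~ (exists x, P x) -> least d P = d.
Proof.
  intro H. unfold least.
  destruct (excluded_middle_informative _) as [H'|H']; auto.
  exfalso. destruct H' as [x [Hx _]]. eauto.
Qed.

Definition succ (y : L) : L := least y (fun z => y <. z).

Lemma succ_spec y z : y <. z -> y <. succ y /\ succ y <=. z.
Proof.
  intro H. destruct (@least_spec y (fun z => y <. z)) as [H1 H2]; eauto.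
Qed.

Lemma lt_succ_le y z w : y <. z -> w <. succ y -> w <=. y.
Proof.
  intros H Hw. apply not_lt_le. intro Hyw.
  exact (le_not_lt (proj2 (succ_spec Hyw)) Hw).
Qed.

Lemma succ_of_max y : ~ (exists z, y <. z) -> succ y = y.
Proof. apply least_default. Qed.

(** * Finite and infinite ordinals *)

Fixpoint nat_ord (n : nat) : L :=
  match n with
  | O => least l0 (fun _ => True)
  | S n => succ (nat_ord n)
  end.

Definition infinite (x : L) : Prop := forall n, nat_ord n <. x.

Lemma nat_ord_0_le y : nat_ord 0 <=. y.
Proof. apply (@least_spec l0 (fun _ => True)); eauto. Qed.

Lemma le_nat_ord {n w} : w <=. nat_ord n -> exists j, (j <= n)%nat /\ w = nat_ord j.
Proof.
  revert w; induction n as [|n IH]; intros w Hw.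
  - exists 0%nat. split; auto. apply le_antisym; auto. apply nat_ord_0_le.
  - destruct (classic (exists z, nat_ord n <. z)) as [[z Hz]|Hn]; simpl in Hw.
    + destruct Hw as [Hw|Hw].
      * destruct (IH w (lt_succ_le Hz Hw)) as [j [Hj1 Hj2]]. exists j; split; auto.
      * exists (S n); auto.
    + rewrite (succ_of_max Hn) in Hw.
      destruct (IH w Hw) as [j [Hj1 Hj2]]. exists j; split; auto.
Qed.

Lemma nat_ord_lt_S x n : infinite x -> nat_ord n <. nat_ord (S n).
Proof. intro H. apply (succ_spec (H n)). Qed.

Lemma nat_ord_inj x : infinite x -> forall a b, nat_ord a = nat_ord b -> a = b.
Proof.
  intros H.
  assert (Hmono : forall a b, (a < b)%nat -> nat_ord a <. nat_ord b).
  { intros a b Hab. induction Hab as [|b Hab IH]; [|eapply lt_trans; [exact IH|]];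
      apply (nat_ord_lt_S _ H). }
  intros a b E. destruct (Nat.lt_trichotomy a b) as [h|[h|h]]; auto;
    exfalso; pose proof (Hmono _ _ h) as h'; rewrite E in h'; apply (lt_irrefl h').
Qed.

Lemma infinite_or_finite x :
  infinite x \/ exists N, CardLe (below lt x) (fun j => (j < N)%nat).
Proof.
  destruct (classic (infinite x)) as [H|H]; [left; auto| right].
  apply not_all_ex_not in H. destruct H as [n Hn]. apply not_lt_le in Hn.
  assert (Hc : forall w, below lt x w -> exists j, (j < S n)%nat /\ w = nat_ord j).
  { intros w Hw. destruct (le_nat_ord (n := n) (w := w)) as [j [Hj1 Hj2]].
    - apply lt_le_incl. eapply lt_le_trans; eauto.
    - exists j; split; auto; lia. }
  destruct (partial_choice 0%nat Hc) as [g Hg].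
  exists (S n), g. split.
  - intros w Hw. apply (Hg w Hw).
  - intros a b Ha Hb E. rewrite (proj2 (Hg a Ha)), (proj2 (Hg b Hb)), E. auto.
Qed.

Lemma uncountable_infinite e : Uncountable lt e -> infinite e.
Proof.
  intro He. destruct (infinite_or_finite e) as [H|[N [g [Hg1 Hg2]]]]; auto.
  exfalso. apply He. exists g. intros; auto.
Qed.

Lemma infinite_not_finite x N : infinite x -> ~ CardLe (below lt x) (fun j => (j < N)%nat).
Proof.
  intros Hx [g [Hg1 Hg2]].
  apply (@pigeonhole N (fun n => g (nat_ord n))).
  - intros n _. apply Hg1. apply Hx.
  - intros a b _ _ E. apply (nat_ord_inj Hx). apply Hg2; auto; apply Hx.
Qed.

Definition omega : L := least l0 infinite.

Lemma omega_spec e : infinite e -> infinite omega /\ forall x, infinite x -> omega <=. x.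
Proof. intro He. apply (@least_spec l0 infinite). eauto. Qed.

Lemma lt_omega e y : infinite e -> y <. omega -> exists n, y = nat_ord n.
Proof.
  intros He Hy. destruct (omega_spec He) as [H1 H2].
  assert (exists n, y <=. nat_ord n) as [n Hn].
  { apply NNPP; intro Hn. assert (H : omega <=. y).
    { apply H2. intro n. apply not_le_lt. intro. apply Hn; eauto. }
    exact (le_not_lt H Hy). }
  destruct (le_nat_ord Hn) as [j [_ Hj]]. eauto.
Qed.

Definition omega_bounded (g : L) : Prop :=
  forall t : nat -> L, (forall n, t n <. g) -> exists beta, beta <. g /\ forall n, t n <. beta.

Lemma uncountable_cf_omega_bounded g e :
  IsCf lt g e -> Uncountable lt e -> omega_bounded g.
Proof.
  intros [Hcof Hmin] He b Hb. pose proof (uncountable_infinite He) as Hinf.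
  apply NNPP; intro Hn.
  assert (Hcf : forall beta, beta <. g -> exists n, beta <=. b n).
  { intros beta Hbeta. apply NNPP; intro H. apply Hn. exists beta. split; auto.
    intro n. apply not_le_lt. intro. apply H; eauto. }
  assert (Hidx : forall y, below lt omega y -> exists n, y = nat_ord n)
    by (intros; eapply lt_omega; eauto).
  destruct (partial_choice 0%nat Hidx) as [idx Hidx'].
  assert (Hw : CofMap lt g omega).
  { exists (fun y => b (idx y)). split; auto.
    intros beta Hbeta. destruct (Hcf beta Hbeta) as [n Hn'].
    exists (nat_ord n). split; [apply (omega_spec Hinf)|].
    rewrite (nat_ord_inj Hinf (idx (nat_ord n)) n); auto.
    symmetry. apply Hidx'. apply (omega_spec Hinf). }
  pose proof (Hmin omega Hw) as Hew.
  apply He. exists idx. intros x y Hx Hy E.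
  rewrite (Hidx' x (lt_le_trans Hx Hew)), (Hidx' y (lt_le_trans Hy Hew)), E. auto.
Qed.

(** * Infinite cardinals: limits and squares *)

Lemma infinite_shift nu : infinite nu -> exists s : L -> L,
  (forall y, y <. nu -> s y <. nu) /\ (forall y, s y <> nat_ord 0) /\
  (forall y1 y2, s y1 = s y2 -> y1 = y2).
Proof.
  intro Hnu.
  exists (fun y => if excluded_middle_informative (exists n, y = nat_ord n) then succ y else y).
  assert (Hs : forall n, succ (nat_ord n) = nat_ord (S n)) by reflexivity.
  split; [|split].
  - intros y Hy. destruct (excluded_middle_informative _) as [[n ->]|_]; auto.
    rewrite Hs. apply Hnu.
  - intros y. destruct (excluded_middle_informative _) as [[n ->]|Hn]; intro E.
    + rewrite Hs in E. apply (nat_ord_inj Hnu) in E. discriminate.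
    + apply Hn. eauto.
  - intros y1 y2.
    destruct (excluded_middle_informative (exists n, y1 = nat_ord n)) as [[n1 ->]|H1];
    destruct (excluded_middle_informative (exists n, y2 = nat_ord n)) as [[n2 ->]|H2];
    rewrite ?Hs; intro E; auto.
    + apply (nat_ord_inj Hnu) in E. congruence.
    + exfalso. apply H2. eauto.
    + exfalso. apply H1. eauto.
Qed.

Lemma cardle_add_point nu (X : L -> Prop) p : infinite nu -> CardLe X (below lt nu) ->
  CardLe (fun y => X y \/ y = p) (below lt nu).
Proof.
  intros Hnu [f [Hf1 Hf2]]. destruct (infinite_shift Hnu) as [s [Hs1 [Hs2 Hs3]]].
  exists (fun y => if excluded_middle_informative (y = p) then nat_ord 0 else s (f y)).
  split.
  - intros y Hy. destruct (excluded_middle_informative (y = p)) as [E|E]; [apply Hnu|].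
    apply Hs1, Hf1. destruct Hy; [auto|contradiction].
  - intros y1 y2 Hy1 Hy2.
    destruct (excluded_middle_informative (y1 = p)) as [E1|E1];
    destruct (excluded_middle_informative (y2 = p)) as [E2|E2]; intro E.
    + congruence.
    + exfalso. symmetry in E. exact (Hs2 _ E).
    + exfalso. exact (Hs2 _ E).
    + apply Hs3 in E. destruct Hy1, Hy2; try contradiction. auto.
Qed.

Lemma infinite_card_limit nu a : IsCard lt nu -> infinite nu -> a <. nu ->
  exists a', a <. a' /\ a' <. nu.
Proof.
  intros Hc Hnu Ha. apply NNPP; intro Hn.
  assert (Hle : forall y, y <. nu -> y <=. a).
  { intros y Hy. apply not_lt_le. intro. apply Hn; eauto. }
  assert (Hinf : infinite a).
  { intro n. destruct (Hle _ (Hnu n)) as [h|h]; auto.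
    exfalso. apply (le_not_lt (Hle _ (Hnu (S n)))). rewrite <- h. apply (nat_ord_lt_S _ Hnu). }
  apply (Hc a Ha).
  eapply cardle_subset; [| |apply (cardle_add_point a Hinf (cardle_refl (below lt a)))].
  - intros y Hy. destruct (Hle y Hy); auto.
  - auto.
Qed.

(* Send each element to the least ordinal not used by its predecessors. *)
Lemma cardle_of_small_segments {A : Type} (a0 : A) {R : A -> A -> Prop} {P : A -> Prop} {nu} :
  well_founded R -> (forall u v, R u v \/ u = v \/ R v u) ->
  (forall w, P w -> ~ CardLe (below lt nu) (fun w' => R w' w /\ P w')) ->
  CardLe P (below lt nu).
Proof.
  intros Hwf Htot Hsmall.
  set (F := Fix Hwf (fun _ => L)
              (fun w rec => least l0 (fun x => ~ exists w' (H : R w' w), P w' /\ rec w' H = x))).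
  assert (Feq : forall w, F w = least l0 (fun x => ~ exists w', R w' w /\ P w' /\ F w' = x)).
  { intro w. unfold F at 1. rewrite Fix_eq.
    - f_equal. apply functional_extensionality; intro x. apply propositional_extensionality.
      split; intros H1 H2; apply H1.
      + destruct H2 as [w' [H H']]. exists w', H. exact H'.
      + destruct H2 as [w' [H H']]. exists w'. eauto.
    - intros x f g Hfg. f_equal. apply functional_extensionality; intro y.
      apply propositional_extensionality.
      split; intros H1 [w' [H2 H3]]; apply H1; exists w', H2;
        [rewrite Hfg | rewrite <- Hfg]; auto. }
  assert (Fspec : forall w, P w -> F w <. nu /\ ~ exists w', R w' w /\ P w' /\ F w' = F w).
  { intros w Hw.
    assert (Ex : exists x, x <. nu /\ ~ exists w', R w' w /\ P w' /\ F w' = x).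
    { apply NNPP; intro Hn.
      assert (Hall : forall x, below lt nu x -> exists w', R w' w /\ P w' /\ F w' = x).
      { intros x Hx. apply NNPP; intro H1. apply Hn. eauto. }
      destruct (partial_choice a0 Hall) as [sel Hsel].
      apply (Hsmall w Hw). exists sel. split.
      - intros x Hx. destruct (Hsel x Hx) as [H1 [H2 _]]. auto.
      - intros x y Hx Hy E. rewrite <- (proj2 (proj2 (Hsel x Hx))), E.
        apply (Hsel y Hy). }
    destruct Ex as [x [Hx1 Hx2]].
    destruct (@least_spec l0 (fun x => ~ exists w', R w' w /\ P w' /\ F w' = x)) as [Hm1 Hm2].
    { eauto. }
    rewrite <- Feq in Hm1, Hm2. split; auto.
    eapply le_lt_trans; [apply Hm2; exact Hx2| exact Hx1]. }
  exists F. split.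
  - intros w Hw. apply (Fspec w Hw).
  - intros w1 w2 Hw1 Hw2 E. destruct (Htot w1 w2) as [H|[H|H]]; auto; exfalso.
    + apply (proj2 (Fspec w2 Hw2)). eauto.
    + apply (proj2 (Fspec w1 Hw1)). eauto.
Qed.

Definition pair_max (w : L * L) : L := omax (fst w) (snd w).

(* Goedel's well-order of pairs. *)
Definition pair_lt (w1 w2 : L * L) : Prop :=
  pair_max w1 <. pair_max w2 \/
  (pair_max w1 = pair_max w2 /\
   (fst w1 <. fst w2 \/ (fst w1 = fst w2 /\ snd w1 <. snd w2))).

Lemma pair_lt_wf : well_founded pair_lt.
Proof.
  assert (H : forall M a b, omax a b = M -> Acc pair_lt (a, b)).
  { intro M. induction M as [M IHM] using (well_founded_induction lt_wf).
    intro a. induction a as [a IHa] using (well_founded_induction lt_wf).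
    intro b. induction b as [b IHb] using (well_founded_induction lt_wf).
    intro E. constructor. intros [c d] HG. unfold pair_lt, pair_max in HG; simpl in HG.
    destruct HG as [H|[H1 [H2|[H3 H4]]]].
    - rewrite E in H. eapply IHM; eauto.
    - eapply IHa; eauto. rewrite H1; auto.
    - subst c. apply IHb; auto. rewrite H1; auto. }
  intros [a b]. eapply H; eauto.
Qed.

Lemma pair_lt_trichotomy w1 w2 : pair_lt w1 w2 \/ w1 = w2 \/ pair_lt w2 w1.
Proof.
  destruct w1 as [a b], w2 as [c d]. unfold pair_lt, pair_max; simpl.
  destruct (lt_trichotomy (omax a b) (omax c d)) as [h|[h|h]];
    [left; left; auto| |right; right; left; auto].
  destruct (lt_trichotomy a c) as [h2|[h2|h2]]; [left; right; auto| |right; right; right; auto].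
  subst c. destruct (lt_trichotomy b d) as [h3|[h3|h3]];
    [left; right; auto|subst; auto|right; right; right; auto].
Qed.

Lemma pair_lt_bound w' w : pair_lt w' w -> fst w' <=. pair_max w /\ snd w' <=. pair_max w.
Proof.
  intro H. assert (Hm : pair_max w' <=. pair_max w).
  { destruct H as [H|[H _]]; [left; auto| right; auto]. }
  split; eapply le_trans; [apply le_omax_l| exact Hm| apply le_omax_r| exact Hm].
Qed.

Definition upto (M : L) : L -> Prop := fun c => c <=. M.

Lemma card_gt_square_upto nu M : IsCard lt nu -> infinite nu -> M <. nu ->
  (forall c, c <. nu -> IsCard lt c -> infinite c ->
     CardLe (prodset (below lt c) (below lt c)) (below lt c)) ->
  ~ CardLe (below lt nu) (prodset (upto M) (upto M)).
Proof.
  intros Hc Hnu HM IH HC. destruct (infinite_card_limit Hc Hnu HM) as [M' [HM1 HM2]].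
  destruct (@least_exists (fun x => CardLe (upto M) (below lt x))) as [c [Hc1 Hc2]].
  { exists M'. exists (fun x => x). split; auto. intros x Hx. eapply le_lt_trans; eauto. }
  assert (HcM : c <. nu).
  { eapply le_lt_trans; [apply Hc2| exact HM2].
    exists (fun x => x); split; auto; intros x Hx; eapply le_lt_trans; eauto. }
  assert (Hcc : IsCard lt c).
  { intros y Hy Hcy. exact (le_not_lt (Hc2 y (cardle_trans Hc1 Hcy)) Hy). }
  destruct (infinite_or_finite c) as [Hinf|[N HN]].
  - apply (Hc c HcM). eapply cardle_trans; [exact HC|].
    eapply cardle_trans; [exact (cardle_prod Hc1 Hc1)|exact (IH c HcM Hcc Hinf)].
  - apply (infinite_not_finite (N := N * N) Hnu).
    eapply cardle_trans; [exact HC|].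
    eapply cardle_trans; [exact (cardle_prod (cardle_trans Hc1 HN) (cardle_trans Hc1 HN))|].
    apply cardle_fin_square.
Qed.

Theorem cardle_square nu : IsCard lt nu -> infinite nu ->
  CardLe (prodset (below lt nu) (below lt nu)) (below lt nu).
Proof.
  induction nu as [nu IH] using (well_founded_induction lt_wf). intros Hc Hnu.
  apply (cardle_of_small_segments (R := pair_lt) (l0, l0));
    [exact pair_lt_wf|exact pair_lt_trichotomy|].
  intros w [Hw1 Hw2] HC.
  apply (card_gt_square_upto Hc Hnu (omax_lub_lt Hw1 Hw2)); [auto|].
  refine (cardle_subset _ _ HC); auto.
  intros w' [Hw' _]. apply (pair_lt_bound Hw').
Qed.

(** * Cofinality, ladders and clubs *)

Definition IsLadder (g e : L) (G : L -> L) : Prop :=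
  (forall x, x <. e -> G x <. g) /\
  (forall b, b <. g -> exists x, x <. e /\ b <=. G x) /\
  (forall x y, x <. e -> y <. e -> x <=. y -> G x <=. G y).

Lemma cf_exists d : exists e, IsCf lt d e.
Proof.
  destruct (@least_exists (fun e => CofMap lt d e)) as [e [H1 H2]].
  - exists d, (fun x => x). split; auto. intros b Hb. exists b. split; auto. apply le_refl.
  - exists e. split; auto.
Qed.

Lemma cf_unique d e e' : IsCf lt d e -> IsCf lt d e' -> e = e'.
Proof. intros [H1 H2] [H1' H2']. apply le_antisym; auto. Qed.

Lemma cf_bounded_prefix {d e g0 y} : IsCf lt d e -> (forall x, x <. e -> g0 x <. d) -> y <. e ->
  exists beta, beta <. d /\ forall w, w <. y -> g0 w <=. beta.
Proof.
  intros [_ Hmin] Hg0 Hy. apply NNPP; intro Hn.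
  assert (H : CofMap lt d y).
  { exists g0. split.
    - intros x Hx. apply Hg0. eapply lt_trans; eauto.
    - intros b Hb. apply NNPP; intro H. apply Hn. exists b. split; auto.
      intros w Hw. apply not_lt_le. intro. apply H. exists w. split; auto. apply lt_le_incl; auto. }
  exact (le_not_lt (Hmin y H) Hy).
Qed.

(* The ladder sends x to the sup of the first x+1 values of a cofinal map of minimal length. *)
Lemma cf_ladder_exists d e : IsCf lt d e -> exists G, IsLadder d e G.
Proof.
  intros He. pose proof He as [[g0 [Hg1 Hg2]] _].
  set (prefix := fun y z => exists w, w <=. y /\ z = g0 w).
  assert (Hbd : forall y, y <. e -> exists s, IsSup lt s (prefix y) /\ s <. d).
  { intros y Hy. destruct (cf_bounded_prefix He Hg1 Hy) as [beta [Hb1 Hb2]].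
    destruct (@sup_exists (prefix y) (omax beta (g0 y))) as [s Hs].
    { intros z [w [[Hw|Hw] ->]]; [eapply le_trans; [apply Hb2; auto|apply le_omax_l]|].
      subst. apply le_omax_r. }
    exists s. split; auto. eapply le_lt_trans; [apply (sup_least Hs)|].
    - intros z [w [[Hw|Hw] ->]]; [eapply le_trans; [apply Hb2; auto|apply le_omax_l]|].
      subst. apply le_omax_r.
    - apply omax_lub_lt; auto. }
  destruct (partial_choice l0 Hbd) as [G HG].
  exists G. split; [|split].
  - intros x Hx. apply (HG x Hx).
  - intros b Hb. destruct (Hg2 b Hb) as [x [Hx1 Hx2]]. exists x. split; auto.
    eapply le_trans; [exact Hx2|]. apply (sup_ub (proj1 (HG x Hx1))).
    exists x; split; auto; apply le_refl.
  - intros x y Hx Hy Hxy. apply (sup_least (proj1 (HG x Hx))). intros z [w [Hw ->]].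
    apply (sup_ub (proj1 (HG y Hy))). exists w. split; auto. eapply le_trans; eauto.
Qed.

Lemma iterate_sup (Dom : L -> Prop) (next : L -> L) b :
  (forall x y, Dom y -> x <=. y -> Dom x) ->
  (forall c, Dom c -> Dom (next c) /\ c <. next c) ->
  (forall t : nat -> L, (forall n, Dom (t n)) -> exists beta, Dom beta /\ forall n, t n <. beta) ->
  Dom b ->
  exists z, Dom z /\ IsLimit lt z /\ (forall n, Nat.iter n next b <. z) /\
    (forall y, y <. z -> exists n, y <. Nat.iter n next b).
Proof.
  intros Hdown Hnext Hom Hb.
  assert (Hd : forall n, Dom (Nat.iter n next b)).
  { induction n; simpl; auto. apply Hnext; auto. }
  assert (Hinc : forall n, Nat.iter n next b <. Nat.iter (S n) next b).
  { intro n. simpl. apply Hnext; auto. }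
  destruct (Hom _ Hd) as [beta [Hbeta1 Hbeta2]].
  destruct (@sup_exists (fun z => exists n, z = Nat.iter n next b) beta) as [z Hz].
  { intros z [n ->]. apply lt_le_incl; auto. }
  assert (Hlt : forall n, Nat.iter n next b <. z).
  { intro n. eapply lt_le_trans; [apply (Hinc n)|]. apply (sup_ub Hz). eauto. }
  assert (Hcof : forall y, y <. z -> exists n, y <. Nat.iter n next b).
  { intros y Hy. destruct (lt_sup_witness Hz Hy) as [w [[n ->] H]]. eauto. }
  exists z. split; [|split; [|split]]; auto.
  - eapply Hdown; [exact Hbeta1|]. apply (sup_least Hz). intros w [n ->]. apply lt_le_incl; auto.
  - split; [exists b; apply (Hlt 0%nat)|].
    intros y Hy. destruct (Hcof y Hy) as [n Hn]. exists (Nat.iter n next b). auto.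
Qed.

Lemma iterate_sup_below g (next : L -> L) b : omega_bounded g ->
  (forall c, c <. g -> next c <. g /\ c <. next c) -> b <. g ->
  exists z, z <. g /\ IsLimit lt z /\ (forall n, Nat.iter n next b <. z) /\
    (forall y, y <. z -> exists n, y <. Nat.iter n next b).
Proof.
  intros Hom Hn Hb. apply (@iterate_sup (fun x => x <. g)); auto.
  intros; eapply le_lt_trans; eauto.
Qed.

Lemma omega_bounded_limit g c : omega_bounded g -> c <. g -> exists w, c <. w /\ w <. g.
Proof.
  intros Hom Hc. destruct (Hom (fun _ => c)) as [beta [H1 H2]]; auto.
  exists beta. split; auto. apply (H2 0%nat).
Qed.

Lemma club_above g C b : ClubOf lt g C -> b <. g -> ClubOf lt g (fun z => C z /\ b <. z).
Proof.
  intros [Ha [Hb Hc]] Hbg. split; [|split].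
  - intros c [H _]; auto.
  - intros b' Hb'. destruct (Hb (omax b b') (omax_lub_lt Hbg Hb')) as [c [Hc1 Hc2]].
    exists c. split; [split|]; auto; eapply le_lt_trans; eauto; [apply le_omax_l|apply le_omax_r].
  - intros d Hd Hl Hcof. split.
    + apply Hc; auto. intros b' Hb'. destruct (Hcof b' Hb') as [c [[A1 A2] A3]]. eauto.
    + destruct Hl as [[y Hy] _]. destruct (Hcof y Hy) as [c [[A1 A2] [A3 A4]]].
      eapply lt_trans; eauto.
Qed.

Lemma club_inter g C1 C2 : omega_bounded g -> ClubOf lt g C1 -> ClubOf lt g C2 ->
  ClubOf lt g (fun z => C1 z /\ C2 z).
Proof.
  intros Hom [H1a [H1b H1c]] [H2a [H2b H2c]].
  split; [|split].
  - intros c [Hc _]; auto.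
  - intros b Hb.
    destruct (partial_choice l0 H1b) as [n1 Hn1].
    destruct (partial_choice l0 H2b) as [n2 Hn2].
    set (next := fun c => n2 (n1 c)).
    assert (Hnext : forall c, c <. g -> C2 (next c) /\ C1 (n1 c) /\ c <. n1 c /\ n1 c <. next c).
    { intros c Hc. destruct (Hn1 c Hc) as [A1 A2].
      destruct (Hn2 (n1 c) (H1a _ A1)) as [B1 B2]. auto. }
    destruct (@iterate_sup_below g next b Hom) as [z [Hz1 [Hz2 [Hz3 Hz4]]]]; auto.
    { intros c Hc. destruct (Hnext c Hc) as [A [B [C D]]].
      split; [apply H2a; auto| eapply lt_trans; eauto]. }
    assert (Hit : forall n, Nat.iter n next b <. g) by (intro n; eapply lt_trans; [apply Hz3|auto]).
    exists z. split; [split|].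
    + apply H1c; auto. intros y Hy. destruct (Hz4 y Hy) as [n Hn].
      destruct (Hnext _ (Hit n)) as [A [B [C D]]].
      exists (n1 (Nat.iter n next b)). split; auto. split; [eapply lt_trans; eauto|].
      eapply lt_trans; [exact D|]. apply (Hz3 (S n)).
    + apply H2c; auto. intros y Hy. destruct (Hz4 y Hy) as [n Hn].
      destruct (Hnext _ (Hit n)) as [A [B [C D]]].
      exists (next (Nat.iter n next b)). split; auto. split; [|apply (Hz3 (S n))].
      eapply lt_trans; [exact Hn|]. eapply lt_trans; eauto.
    + apply (Hz3 0%nat).
  - intros d Hd Hl Hc. split; [apply H1c|apply H2c]; auto;
      intros b Hb; destruct (Hc b Hb) as [c [[A1 A2] [A3 A4]]]; eauto.
Qed.

Lemma club_closure_points g C0 (rho : L -> L) : omega_bounded g -> ClubOf lt g C0 ->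
  (forall c, c <. g -> exists b, b <. g /\ forall z, C0 z -> z <=. c -> rho z <=. b) ->
  ClubOf lt g (fun z => C0 z /\ forall z', C0 z' -> z' <. z -> rho z' <. z).
Proof.
  intros Hom [C0a [C0b C0c]] Hrho.
  destruct (partial_choice l0 Hrho) as [bnd Hbnd].
  assert (Hnx : forall c, c <. g -> exists c', C0 c' /\ c <. c' /\ bnd c <. c').
  { intros c Hc. destruct (C0b (omax c (bnd c))) as [c' [A B]].
    - apply omax_lub_lt; auto. apply (Hbnd c Hc).
    - exists c'. split; auto. split; eapply le_lt_trans; eauto; [apply le_omax_l|apply le_omax_r]. }
  destruct (partial_choice l0 Hnx) as [nx Hnxs].
  split; [|split].
  - intros c [Hc _]. auto.
  - intros b Hb.
    destruct (@iterate_sup_below g nx b Hom) as [z [Hz1 [Hz2 [Hz3 Hz4]]]]; auto.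
    { intros c Hc. destruct (Hnxs c Hc) as [A [B _]]. split; auto. }
    assert (Hit : forall n, Nat.iter n nx b <. g) by (intro n; eapply lt_trans; [apply Hz3|auto]).
    exists z. split; [split|apply (Hz3 0%nat)].
    + apply C0c; auto. intros y Hy. destruct (Hz4 y Hy) as [n Hn].
      destruct (Hnxs _ (Hit n)) as [A [B _]]. exists (nx (Nat.iter n nx b)).
      split; auto. split; [eapply lt_trans; eauto|]. apply (Hz3 (S n)).
    + intros z' Hz' Hzz. destruct (Hz4 z' Hzz) as [n Hn].
      destruct (Hnxs _ (Hit n)) as [_ [_ D]].
      eapply le_lt_trans; [apply (proj2 (Hbnd _ (Hit n))); auto; apply lt_le_incl; auto|].
      eapply lt_trans; [exact D|]. apply (Hz3 (S n)).
  - intros d' Hd' Hl Hcof. split.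
    + apply C0c; auto. intros b Hb. destruct (Hcof b Hb) as [c [[A _] B]]. eauto.
    + intros z' Hz' Hzd. destruct (Hcof z' Hzd) as [c [[A Bc] [B D]]].
      eapply lt_trans; [apply Bc; auto|auto].
Qed.

Section LadderAccumulation.
Variables (g e : L) (G : L -> L).

Definition ladder_acc (z : L) : Prop :=
  z <. g /\ IsLimit lt z /\ forall b, b <. z -> exists y, y <. e /\ b <. G y /\ G y <. z.

Definition acc_index (z : L) : L := least l0 (fun x => x <. e /\ z <=. G x).

Hypothesis HG : IsLadder g e G.

Lemma acc_index_spec z : z <. g ->
  (acc_index z <. e /\ z <=. G (acc_index z)) /\
  forall y, y <. e -> z <=. G y -> acc_index z <=. y.
Proof.
  intro Hz. destruct HG as [_ [HG2 _]].
  destruct (@least_spec l0 (fun x => x <. e /\ z <=. G x)) as [H1 H2].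
  - destruct (HG2 z Hz) as [x Hx]. eauto.
  - split; auto.
Qed.

Lemma acc_index_mono z c : z <=. c -> c <. g -> acc_index z <=. acc_index c.
Proof.
  intros Hzc Hc. destruct (acc_index_spec Hc) as [[A1 A2] _].
  apply (acc_index_spec (le_lt_trans Hzc Hc)); auto. eapply le_trans; eauto.
Qed.

Lemma acc_index_inj z1 z2 : ladder_acc z1 -> ladder_acc z2 ->
  acc_index z1 = acc_index z2 -> z1 = z2.
Proof.
  assert (Hw : forall u v, ladder_acc u -> ladder_acc v -> u <. v ->
                 acc_index u = acc_index v -> False).
  { intros u v Hu Hv Huv E. destruct Hv as [Hvg [_ Hv]].
    destruct (Hv u Huv) as [y [Hy1 [Hy2 Hy3]]].
    pose proof (proj2 (acc_index_spec (proj1 Hu)) y Hy1 (lt_le_incl Hy2)) as C.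
    rewrite E in C. destruct (acc_index_spec Hvg) as [[B1 B2] _].
    destruct HG as [_ [_ HG3]].
    exact (lt_not_le Hy3 (le_trans B2 (HG3 _ _ B1 Hy1 C))). }
  intros H1 H2 E. destruct (lt_trichotomy z1 z2) as [h|[h|h]]; auto; exfalso; eauto.
Qed.

Lemma ladder_acc_card : CardLe ladder_acc (below lt e).
Proof.
  exists acc_index. split; [|intros; apply acc_index_inj; auto].
  intros z [Hz _]. apply (acc_index_spec Hz).
Qed.

Lemma ladder_acc_cf z : ladder_acc z -> exists x, x <. e /\ CofMap lt z x.
Proof.
  intros Hz. pose proof Hz as [Hzg [_ Hcof]].
  destruct (acc_index_spec Hzg) as [[Hx1 Hx2] Hx3]. exists (acc_index z). split; auto.
  destruct HG as [_ [_ HG3]].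
  exists G. split.
  - intros y Hy. apply not_le_lt. intro H.
    exact (le_not_lt (Hx3 y (lt_trans Hy Hx1) H) Hy).
  - intros b Hb. destruct (Hcof b Hb) as [y [Hy1 [Hy2 Hy3]]].
    exists y. split; [|apply lt_le_incl; auto]. apply not_le_lt. intro H.
    exact (lt_not_le Hy3 (le_trans Hx2 (HG3 _ _ Hx1 Hy1 H))).
Qed.

Lemma ladder_acc_club : omega_bounded g -> ClubOf lt g ladder_acc.
Proof.
  intro Hom. destruct HG as [HG1 [HG2 _]]. split; [|split].
  - intros c [H _]; auto.
  - intros b Hb.
    assert (Hn : forall c, c <. g -> exists y, y <. e /\ c <. G y).
    { intros c Hc. destruct (omega_bounded_limit Hom Hc) as [w [Hw1 Hw2]].
      destruct (HG2 w Hw2) as [y [Hy1 Hy2]]. exists y. split; auto. eapply lt_le_trans; eauto. }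
    destruct (partial_choice l0 Hn) as [sel Hsel].
    set (next := fun c => G (sel c)).
    destruct (@iterate_sup_below g next b Hom) as [z [Hz1 [Hz2 [Hz3 Hz4]]]]; auto.
    { intros c Hc. destruct (Hsel c Hc) as [A B]. unfold next. split; auto. }
    exists z. split; [|apply (Hz3 0%nat)].
    split; [auto|split; auto]. intros y Hy. destruct (Hz4 y Hy) as [n Hn'].
    assert (Hi : Nat.iter n next b <. g) by (eapply lt_trans; [apply Hz3|auto]).
    destruct (Hsel _ Hi) as [A B]. exists (sel (Nat.iter n next b)).
    split; auto. split; [eapply lt_trans; eauto|]. apply (Hz3 (S n)).
  - intros d Hd Hl Hc. split; [auto|split; auto]. intros b Hb.
    destruct (Hc b Hb) as [c [[A1 [A2 A3]] [A4 A5]]].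
    destruct (A3 b A4) as [y [B1 [B2 B3]]]. exists y. split; auto. split; auto.
    eapply lt_trans; eauto.
Qed.

End LadderAccumulation.

Lemma cardle_indexed_union {nu t} {D I : L -> Prop} {F : L -> L -> Prop} :
  t <. nu -> CardLe (prodset (below lt nu) (below lt nu)) (below lt nu) ->
  CardLe D (below lt nu) -> CardLe I (below lt t) ->
  (forall b, I b -> CardLe (F b) (below lt nu)) ->
  CardLe (fun z => D z \/ exists b, I b /\ F b z) (below lt nu).
Proof.
  intros Ht Hsq [hD [HD1 HD2]] [hI [HI1 HI2]] HF.
  assert (HF' : forall b, I b -> exists h : L -> L,
             (forall z, F b z -> h z <. nu) /\
             forall z z', F b z -> F b z' -> h z = h z' -> z = z').
  { intros b Hb. destruct (HF b Hb) as [h [H1 H2]]. exists h. split; auto. }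
  destruct (partial_choice (fun x => x) HF') as [hF HhF].
  assert (Hw : forall z, (exists b, I b /\ F b z) -> exists b, I b /\ F b z) by auto.
  destruct (partial_choice l0 Hw) as [wb Hwb].
  eapply cardle_trans; [|exact Hsq].
  exists (fun z => if excluded_middle_informative (D z) then (t, hD z)
                   else (hI (wb z), hF (wb z) z)).
  split.
  - intros z Hz. destruct (excluded_middle_informative (D z)) as [H|H].
    + split; simpl; auto.
    + assert (Hb : exists b, I b /\ F b z) by (destruct Hz; [contradiction|auto]).
      destruct (Hwb z Hb) as [A B]. split; simpl.
      * eapply lt_trans; [apply HI1; auto|auto].
      * apply (HhF _ A); auto.
  - intros z1 z2 Hz1 Hz2.
    destruct (excluded_middle_informative (D z1)) as [H1|H1];
    destruct (excluded_middle_informative (D z2)) as [H2|H2]; intro E;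
      pose proof (f_equal fst E) as E1; pose proof (f_equal snd E) as E2; simpl in E1, E2.
    + apply HD2; auto.
    + exfalso. destruct Hz2 as [|Hb2]; [contradiction|].
      destruct (Hwb z2 Hb2) as [A _]. pose proof (HI1 _ A) as C. rewrite <- E1 in C.
      exact (lt_irrefl C).
    + exfalso. destruct Hz1 as [|Hb1]; [contradiction|].
      destruct (Hwb z1 Hb1) as [A _]. pose proof (HI1 _ A) as C. rewrite E1 in C.
      exact (lt_irrefl C).
    + destruct Hz1 as [|Hb1]; [contradiction|]. destruct Hz2 as [|Hb2]; [contradiction|].
      destruct (Hwb z1 Hb1) as [A1 B1]. destruct (Hwb z2 Hb2) as [A2 B2].
      apply HI2 in E1; auto. rewrite E1 in E2, A1, B1. apply (HhF _ A2); auto.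
Qed.

(** * The sets [a^g_i] *)

Section Construction.
Variables (k : L) (mu : L -> L) (level : L -> L -> L) (cf : L -> L) (ladder : L -> L -> L).

Hypothesis level_lt : forall g z, z <. g -> level g z <. k.
Hypothesis level_card : forall g i, i <. k ->
  CardLe (fun z => z <. g /\ level g z <=. i) (below lt (mu i)).
Hypothesis k_lt_mu : forall i, i <. k -> k <. mu i.
Hypothesis mu_square : forall i, i <. k ->
  CardLe (prodset (below lt (mu i)) (below lt (mu i))) (below lt (mu i)).
Hypothesis cf_spec : forall g, IsCf lt g (cf g).
Hypothesis ladder_spec : forall g, IsLadder g (cf g) (ladder g).

Definition small_acc (g b : L) : Prop := cf g <=. k /\ ladder_acc g (cf g) (ladder g) b.

Inductive member (i : L) : L -> L -> Prop :=
| member_level g z : z <. g -> level g z <=. i -> member i g z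
| member_acc g b z : small_acc g b -> member i b z -> member i g z.

Lemma small_acc_lt g b : small_acc g b -> b <. g.
Proof. intros [_ [H _]]; auto. Qed.

Lemma member_lt i g z : member i g z -> z <. g.
Proof.
  induction 1 as [g z H _|g b z Hb _ IH]; auto. eapply lt_trans; [exact IH|apply (small_acc_lt Hb)].
Qed.

Lemma member_mono i j g z : i <=. j -> member i g z -> member j g z.
Proof.
  intros Hij H. induction H as [g z H1 H2|g b z Hb _ IH].
  - apply member_level; auto. eapply le_trans; eauto.
  - eapply member_acc; eauto.
Qed.

Lemma member_cover g z : z <. g -> exists j, j <. k /\ member j g z.
Proof.
  intro Hz. exists (level g z). split; auto. apply member_level; auto. apply le_refl.
Qed.

Lemma small_acc_card g : CardLe (small_acc g) (below lt k).
Proof.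
  destruct (ladder_acc_card (ladder_spec g)) as [h [Hh1 Hh2]].
  exists h. split.
  - intros z [Hz1 Hz2]. eapply lt_le_trans; [apply Hh1; auto|auto].
  - intros x y [_ Hx] [_ Hy]. apply Hh2; auto.
Qed.

Lemma member_card i g : i <. k -> CardLe (member i g) (below lt (mu i)).
Proof.
  intro Hi. induction g as [g IH] using (well_founded_induction lt_wf).
  eapply cardle_subset; [| |apply (cardle_indexed_union (k_lt_mu Hi) (mu_square Hi)
      (level_card g Hi) (small_acc_card g) (F := member i))]; auto.
  - intros z Hz. inversion Hz; subst; eauto.
  - intros b Hb. exact (IH b (small_acc_lt Hb)).
Qed.

Hypothesis L_bounded_segment : forall b (t : L -> L), exists beta, forall x, x <. b -> t x <. beta.
Hypothesis L_bounded_omega : forall t : nat -> L, exists beta, forall n, t n <. beta.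
Hypothesis k_regular : forall X (t : L -> L), X <. k -> (forall y, y <. X -> t y <. k) ->
  exists J, J <. k /\ forall y, y <. X -> t y <=. J.
Hypothesis k_uncountable : Uncountable lt k.

Lemma L_iterate_sup (next : L -> L) b : (forall c, c <. next c) ->
  exists z, IsLimit lt z /\ (forall n, Nat.iter n next b <. z) /\
    (forall y, y <. z -> exists n, y <. Nat.iter n next b).
Proof.
  intro Hnext. destruct (@iterate_sup (fun _ => True) next b) as [z [_ Hz]]; eauto.
  intros t _. destruct (L_bounded_omega t) as [beta Hb]. eauto.
Qed.

Lemma cf_k_omega_bounded d : IsCf lt d k -> omega_bounded d.
Proof. intro H. exact (uncountable_cf_omega_bounded H k_uncountable). Qed.

Section Colouring.
Variable f : L -> L.

Definition both_in (i g z : L) : Prop := member i g z /\ member i g (f z).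
Definition Af (i g : L) : Prop := IsSup lt g (both_in i g).
Definition covered (d : L) : Prop := exists i, i <. k /\ Af i d.

Definition f_closed (d : L) : Prop := IsLimit lt d /\ forall z, z <. d -> f z <. d.
Definition f_closed_limit (d : L) : Prop :=
  IsLimit lt d /\ forall b, b <. d -> exists c, f_closed c /\ b <. c /\ c <. d.

Lemma both_in_lt i g z : both_in i g z -> z <. g.
Proof. intros [H _]. apply (member_lt H). Qed.

Lemma both_in_mono i j g z : i <=. j -> both_in i g z -> both_in j g z.
Proof. intros H [A B]. split; eapply member_mono; eauto. Qed.

Lemma both_in_small_acc i g b z : small_acc g b -> both_in i b z -> both_in i g z.
Proof. intros H [A B]. split; eapply member_acc; eauto. Qed.

Lemma both_in_cover d z : f_closed d -> z <. d -> exists j, j <. k /\ both_in j d z.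
Proof.
  intros [_ Hd] Hz. destruct (member_cover Hz) as [j1 [H1 H1']].
  destruct (member_cover (Hd z Hz)) as [j2 [H2 H2']].
  exists (omax j1 j2). split; [apply omax_lub_lt; auto|].
  split; eapply member_mono; eauto; [apply le_omax_l|apply le_omax_r].
Qed.

Lemma Af_mono i j g : i <=. j -> Af i g -> Af j g.
Proof.
  intros Hij [_ H2]. split.
  - intros z Hz. apply lt_le_incl. apply (both_in_lt Hz).
  - intros b Hb. apply H2. intros z Hz. apply Hb. eapply both_in_mono; eauto.
Qed.

Lemma f_closed_of_limit d : IsLimit lt d ->
  (forall b, b <. d -> exists c, f_closed c /\ b <. c /\ c <. d) -> f_closed d.
Proof.
  intros Hl Hc. split; auto. intros z Hz. destruct (Hc z Hz) as [c [[_ Hc1] [Hc2 Hc3]]].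
  eapply lt_trans; [apply Hc1; auto|auto].
Qed.

Lemma f_closed_club : ClosedUnboundedL lt f_closed.
Proof.
  split; [|exact f_closed_of_limit].
  intro b.
  assert (Hn : forall c : L, True -> exists beta, c <. beta /\ forall z, z <. c -> f z <. beta).
  { intros c _. destruct (L_bounded_segment c f) as [b1 Hb1].
    destruct (L_bounded_omega (fun _ => omax c b1)) as [b2 Hb2].
    exists b2. split; [eapply le_lt_trans; [apply le_omax_l|apply (Hb2 0%nat)]|].
    intros z Hz. eapply lt_trans; [apply Hb1; auto|].
    eapply le_lt_trans; [apply le_omax_r|apply (Hb2 0%nat)]. }
  destruct (partial_choice l0 Hn) as [nx Hnx].
  destruct (@L_iterate_sup nx b) as [z [Hz1 [Hz2 Hz3]]]; [intro c; apply (Hnx c I)|].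
  exists z. split; [|apply (Hz2 0%nat)]. split; auto. intros y Hy.
  destruct (Hz3 y Hy) as [n Hn']. eapply lt_trans; [|apply (Hz2 (S n))].
  simpl. apply (Hnx _ I); auto.
Qed.

Lemma f_closed_limit_club : ClosedUnboundedL lt f_closed_limit.
Proof.
  destruct f_closed_club as [Eu _]. split.
  - intro b. destruct (partial_choice l0 (fun c (_ : True) => Eu c)) as [nx Hnx].
    destruct (@L_iterate_sup nx b) as [z [Hz1 [Hz2 Hz3]]]; [intro c; apply (Hnx c I)|].
    exists z. split; [|apply (Hz2 0%nat)]. split; auto. intros y Hy.
    destruct (Hz3 y Hy) as [n Hn']. exists (Nat.iter (S n) nx b). split; [|split].
    + simpl. apply (Hnx _ I).
    + eapply lt_trans; [exact Hn'|]. simpl. apply (Hnx _ I).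
    + apply Hz2.
  - intros d Hl Hc. split; auto. intros b Hb. destruct (Hc b Hb) as [c [[_ Hc2] [Hc3 Hc4]]].
    destruct (Hc2 b Hc3) as [c' [A [B C]]]. exists c'. split; auto. split; auto.
    eapply lt_trans; eauto.
Qed.

Lemma covered_of_small_cf d x : f_closed d -> x <. k -> CofMap lt d x -> covered d.
Proof.
  intros Hd Hx [g [Hg1 Hg2]].
  assert (Hj : forall y, y <. x -> exists j, j <. k /\ both_in j d (g y)).
  { intros y Hy. apply both_in_cover; auto. }
  destruct (partial_choice l0 Hj) as [jf Hjf].
  destruct (@k_regular x jf Hx) as [J [HJ1 HJ2]]; [intros y Hy; apply (Hjf y Hy)|].
  exists J. split; auto. apply sup_of_cofinal; [apply Hd|apply both_in_lt|].
  intros b Hb. destruct (Hg2 b Hb) as [y [Hy1 Hy2]]. exists (g y). split; auto.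
  eapply both_in_mono; [|exact (proj2 (Hjf y Hy1))]. auto.
Qed.

Lemma both_in_sups d : ~ covered d ->
  exists s : L -> L, forall j, j <. k -> IsSup lt (s j) (both_in j d) /\ s j <. d.
Proof.
  intro Hn.
  apply (partial_choice l0 (P := fun j => j <. k) (R := fun j s => IsSup lt s (both_in j d) /\ s <. d)).
  intros j Hj. apply sup_lt_of_not_sup.
  - intros z Hz. apply (both_in_lt Hz).
  - intro HA. apply Hn. exists j. auto.
Qed.

Lemma covered_off_cf_k : NonStationaryL lt (fun d => ~ IsCf lt d k /\ ~ covered d).
Proof.
  exists f_closed. split; [apply f_closed_club|]. intros d Hd [Hncf HnA].
  destruct (cf_exists d) as [e He]. destruct (lt_trichotomy e k) as [h|[h|h]].
  - exact (HnA (covered_of_small_cf Hd h (proj1 He))).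
  - subst; contradiction.
  - destruct (both_in_sups HnA) as [s Hs].
    assert (exists b, b <. d /\ forall j, j <. k -> s j <. b) as [b [Hb1 Hb2]].
    { apply NNPP; intro Hn. destruct He as [_ Hmin].
      assert (Hk : CofMap lt d k).
      { exists s. split; [intros j Hj; apply (Hs j Hj)|].
        intros b Hb. apply NNPP; intro H. apply Hn. exists b. split; auto.
        intros j Hj. apply not_le_lt. intro. apply H; eauto. }
      exact (le_not_lt (Hmin k Hk) h). }
    destruct (both_in_cover Hd Hb1) as [j [Hj1 Hj2]].
    exact (le_not_lt (sup_ub (proj1 (Hs j Hj1)) Hj2) (Hb2 j Hj1)).
Qed.

Lemma Af_of_reflects g i :
  (exists e, IsCf lt g e /\ Uncountable lt e /\ e <=. k) -> Reflects lt (Af i) g -> Af i g.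
Proof.
  intros [e [He1 [He2 He3]]] [_ Hst].
  pose proof (cf_unique (cf_spec g) He1) as Ee. subst e.
  pose proof (ladder_acc_club (ladder_spec g) (uncountable_cf_omega_bounded He1 He2)) as Hcl.
  split; [intros z Hz; apply lt_le_incl; apply (both_in_lt Hz)|].
  intros b Hb. apply not_lt_le. intro Hbg.
  destruct (Hst _ (club_above Hcl Hbg)) as [z [[Hz1 Hz2] [Hz3 Hz4]]].
  destruct (lt_sup_witness Hz3 Hz2) as [w [Hw1 Hw2]].
  exact (le_not_lt (Hb w (both_in_small_acc (conj He3 Hz1) Hw1)) Hw2).
Qed.

Definition rank (z : L) : L :=
  if excluded_middle_informative (covered z)
  then least l0 (fun j => j <. k /\ Af j z) else nat_ord 0.

Lemma rank_lt z : rank z <. k.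
Proof.
  unfold rank. destruct (excluded_middle_informative _) as [H|H].
  - apply (@least_spec l0 (fun j => j <. k /\ Af j z) H).
  - apply (uncountable_infinite k_uncountable).
Qed.

Lemma rank_spec z : covered z -> Af (rank z) z.
Proof.
  intro H. unfold rank. destruct (excluded_middle_informative _) as [_|H']; [|contradiction].
  apply (@least_spec l0 (fun j => j <. k /\ Af j z) H).
Qed.

(* The ladder accumulation points up to [c] are indexed by ordinals up to
   [acc_index c < kappa], so regularity of kappa bounds their ranks. *)
Lemma rank_bounded_on_acc d c : IsCf lt d k -> c <. d ->
  exists J, J <. k /\ forall z, ladder_acc d (cf d) (ladder d) z -> z <=. c -> rank z <=. J.
Proof.
  intros Hd Hc. pose proof (cf_unique (cf_spec d) Hd) as Ee.
  set (acc := ladder_acc d (cf d) (ladder d)). set (idx := acc_index (cf d) (ladder d)).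
  assert (Hsel : forall y, (exists z, acc z /\ idx z = y) -> exists z, acc z /\ idx z = y) by auto.
  destruct (partial_choice l0 Hsel) as [sel Hsel'].
  set (X := idx c).
  assert (HX : X <. k) by (rewrite <- Ee; apply (acc_index_spec (ladder_spec d) Hc)).
  destruct (@k_regular X (fun y => rank (sel y)) HX) as [J1 [HJ1 HJ1']]; [intros; apply rank_lt|].
  exists (omax J1 (rank (sel X))). split; [apply omax_lub_lt; auto; apply rank_lt|].
  intros z Hz Hzc.
  assert (Hsz : sel (idx z) = z).
  { destruct (Hsel' (idx z)) as [A B]; eauto. apply (acc_index_inj (ladder_spec d)); auto. }
  rewrite <- Hsz. destruct (acc_index_mono (ladder_spec d) Hzc Hc) as [Hlt|Heq].
  - eapply le_trans; [apply HJ1'; auto|apply le_omax_l].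
  - fold idx X in Heq. rewrite Heq. apply le_omax_r.
Qed.

Lemma f_closed_below_club d : f_closed_limit d -> ClubOf lt d (fun z => f_closed z /\ z <. d).
Proof.
  intros [_ HdE]. split; [|split].
  - intros c [_ Hc]; auto.
  - intros b Hb. destruct (HdE b Hb) as [c [A [B C]]]. eauto.
  - intros d' Hd' Hl Hcof. split; auto. apply f_closed_of_limit; auto.
    intros b Hb. destruct (Hcof b Hb) as [c [[A _] B]]. eauto.
Qed.

Lemma rank_increasing_club d : IsCf lt d k -> ~ covered d -> f_closed_limit d ->
  exists C, ClubOf lt d C /\ forall x y, C x -> C y -> x <. y -> rank x <. rank y.
Proof.
  intros Hcf HnA HdE.
  pose proof (cf_k_omega_bounded Hcf) as Hom.
  pose proof (cf_unique (cf_spec d) Hcf) as Ee.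
  set (C0 := fun z => ladder_acc d (cf d) (ladder d) z /\ (f_closed z /\ z <. d)).
  assert (HC0 : ClubOf lt d C0).
  { apply club_inter; auto;
      [apply (ladder_acc_club (ladder_spec d))|apply f_closed_below_club]; auto. }
  assert (HC0Af : forall z, C0 z -> Af (rank z) z).
  { intros z [Hz [Ez _]]. apply rank_spec.
    destruct (ladder_acc_cf (ladder_spec d) Hz) as [x [Hx1 Hx2]].
    rewrite Ee in Hx1. apply (covered_of_small_cf Ez Hx1 Hx2). }
  assert (HC0acc : forall z, C0 z -> small_acc d z).
  { intros z [Hz _]. split; auto. rewrite Ee. apply le_refl. }
  destruct (both_in_sups HnA) as [beta Hbeta].
  assert (Hbm : forall j j', j <=. j' -> j' <. k -> beta j <=. beta j').
  { intros j j' Hjj Hj'.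
    apply (sup_least (proj1 (Hbeta j (le_lt_trans Hjj Hj')))). intros z Hz.
    apply (sup_ub (proj1 (Hbeta j' Hj'))). eapply both_in_mono; eauto. }
  exists (fun z => C0 z /\ forall z', C0 z' -> z' <. z -> beta (rank z') <. z). split.
  - apply club_closure_points; auto. intros c Hc.
    destruct (rank_bounded_on_acc Hcf Hc) as [J [HJ HJ']].
    exists (beta J). split; [apply Hbeta; auto|].
    intros z [Hz _] Hzc. apply Hbm; auto.
  - intros x y [Cx _] [Cy Cy'] Hxy. apply not_le_lt. intro Hle.
    assert (Hyb : y <=. beta (rank x)).
    { apply (sup_least (Af_mono Hle (HC0Af y Cy))). intros z Hz.
      apply (sup_ub (proj1 (Hbeta _ (rank_lt x)))).
      exact (both_in_small_acc (HC0acc y Cy) Hz). }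
    exact (le_not_lt Hyb (Cy' x Cx Hxy)).
Qed.

Lemma uncovered_cf_k_in_I : exists N, NonStationaryL lt N /\
  InI lt k (fun d => (IsCf lt d k /\ ~ covered d) /\ ~ N d).
Proof.
  exists (fun d => ~ f_closed_limit d). split.
  - exists f_closed_limit. split; [apply f_closed_limit_club|]. auto.
  - exists rank. split; [apply rank_lt|]. intros d [[Hcf HnA] HN] _.
    apply NNPP in HN. apply rank_increasing_club; auto.
Qed.

Lemma uncovered_not_reflects i d : i <. k -> IsCf lt d k -> ~ covered d -> ~ Reflects lt (Af i) d.
Proof.
  intros Hi Hd Hnot Hr. apply Hnot. exists i. split; auto.
  apply Af_of_reflects; auto. exists k. split; auto. split; auto. apply le_refl.
Qed.

End Colouring.
End Construction.

Lemma ladders_exist : exists (cf : L -> L) (ladder : L -> L -> L),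
  (forall g, IsCf lt g (cf g)) /\ (forall g, IsLadder g (cf g) (ladder g)).
Proof.
  assert (H : forall g : L, True ->
             exists p : L * (L -> L), IsCf lt g (fst p) /\ IsLadder g (fst p) (snd p)).
  { intros g _. destruct (cf_exists g) as [e He]. destruct (cf_ladder_exists He) as [G HG].
    exists (e, G). auto. }
  destruct (partial_choice (l0, fun x => x) H) as [p Hp].
  exists (fun g => fst (p g)), (fun g => snd (p g)). split; intro g; apply (Hp g I).
Qed.

(** * Successors of singular cardinals *)

Section SuccessorOfSingular.
Variables (m k : L) (mu : L -> L).
Hypothesis Hm_card : IsCard lt m.
Hypothesis Hlam_small : forall a : L, CardLe (below lt a) (below lt m).
Hypothesis Hlam_big : ~ CardLe (fun _ : L => True) (below lt m).
Hypothesis Hk_cf : IsCf lt m k.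
Hypothesis Hk_unc : Uncountable lt k.
Hypothesis Hk_lt : k <. m.
Hypothesis Hmu_card : forall i, i <. k -> IsCard lt (mu i).
Hypothesis Hmu_incr : forall i j, i <. j -> j <. k -> mu i <. mu j.
Hypothesis Hmu_0 : forall z, IsZero lt z -> k <. mu z.
Hypothesis Hmu_sum :
  CardEq (fun p : L * L => fst p <. k /\ snd p <. mu (fst p)) (below lt m).

Lemma mu_mono i j : i <=. j -> j <. k -> mu i <=. mu j.
Proof. intros [H|H] Hj; [left; apply Hmu_incr; auto| subst; apply le_refl]. Qed.

Lemma k_lt_mu i : i <. k -> k <. mu i.
Proof.
  intro Hi. eapply lt_le_trans; [apply Hmu_0|apply (mu_mono (nat_ord_0_le i) Hi)].
  intros y Hy. exact (le_not_lt (nat_ord_0_le y) Hy).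
Qed.

Lemma infinite_ge_k nu : k <=. nu -> infinite nu.
Proof. intros H n. eapply lt_le_trans; [apply (uncountable_infinite Hk_unc)|exact H]. Qed.

Lemma mu_square i : i <. k ->
  CardLe (prodset (below lt (mu i)) (below lt (mu i))) (below lt (mu i)).
Proof.
  intro Hi. apply cardle_square; auto. apply infinite_ge_k, lt_le_incl, (k_lt_mu Hi).
Qed.

Lemma segment_injections : exists h : L -> L -> L, forall g x y, x <. g -> y <. g ->
  h g x <. m /\ (h g x = h g y -> x = y).
Proof.
  assert (Hi : forall g : L, True -> exists h : L -> L,
             forall x y, x <. g -> y <. g -> h x <. m /\ (h x = h y -> x = y)).
  { intros g _. destruct (Hlam_small g) as [h [H1 H2]]. exists h. intros x y Hx Hy.
    split; [apply H1; exact Hx| exact (H2 x y Hx Hy)]. }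
  destruct (partial_choice (fun x => x) Hi) as [h Hh].
  exists h. intros g. exact (Hh g I).
Qed.

Lemma L_unbounded c : exists c', c <. c'.
Proof.
  apply NNPP; intro Hn. apply Hlam_big.
  refine (cardle_subset _ _
            (cardle_add_point c (infinite_ge_k (lt_le_incl Hk_lt)) (Hlam_small c))); auto.
  intros y _. destruct (lt_trichotomy y c) as [h|[h|h]]; auto. exfalso; apply Hn; eauto.
Qed.

(* Otherwise L injects into the pairs (index, ordinal below the indexed value),
   a set of size mu * mu = mu. *)
Lemma bounded_of_cardle_m (Ix : Type) (i0 : Ix) (X : Ix -> Prop) (t : Ix -> L) :
  CardLe X (below lt m) -> exists beta, forall x, X x -> t x <. beta.
Proof.
  intro HX. apply NNPP; intro Hn.
  assert (Hs : forall c : L, True -> exists x, X x /\ c <. t x).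
  { intros c _. destruct (L_unbounded c) as [c' Hc']. apply NNPP; intro H. apply Hn. exists c'.
    intros x Hx. apply not_le_lt. intro H'. apply H. exists x. split; auto.
    eapply lt_le_trans; eauto. }
  destruct (partial_choice i0 Hs) as [sel Hsel].
  destruct segment_injections as [h Hh].
  apply Hlam_big.
  eapply cardle_trans; [|apply cardle_square; auto; apply infinite_ge_k, lt_le_incl, Hk_lt].
  eapply cardle_trans; [|apply (cardle_prod HX (cardle_refl (below lt m)))].
  exists (fun c => (sel c, h (t (sel c)) c)). split.
  - intros c _. destruct (Hsel c I) as [A B]. split; simpl; auto.
    apply (Hh _ c c B B).
  - intros c1 c2 _ _ E. injection E; intros E2 E1. rewrite E1 in E2.
    destruct (Hsel c1 I) as [A1 B1]. destruct (Hsel c2 I) as [A2 B2]. rewrite E1 in B1.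
    apply (Hh _ c1 c2 B1 B2), E2.
Qed.

Lemma L_bounded_segment b (t : L -> L) : exists beta, forall x, x <. b -> t x <. beta.
Proof. apply (bounded_of_cardle_m l0 (X := below lt b)). apply Hlam_small. Qed.

Lemma L_bounded_omega (t : nat -> L) : exists beta, forall n, t n <. beta.
Proof.
  destruct (bounded_of_cardle_m 0%nat (X := fun _ => True) t) as [beta H].
  - pose proof (uncountable_infinite Hk_unc) as Hk. exists nat_ord. split.
    + intros n _. eapply lt_trans; [apply Hk|auto].
    + intros a b _ _. apply (nat_ord_inj Hk).
  - exists beta; auto.
Qed.

Lemma k_regular X (t : L -> L) : X <. k -> (forall y, y <. X -> t y <. k) ->
  exists J, J <. k /\ forall y, y <. X -> t y <=. J.
Proof.
  intros HX Ht. destruct (cf_ladder_exists Hk_cf) as [g [Hg1 [Hg2 Hg3]]].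
  apply NNPP; intro Hn. destruct Hk_cf as [_ Hmin].
  assert (H : CofMap lt m X).
  { exists (fun y => g (t y)). split; [intros y Hy; apply Hg1; auto|].
    intros b Hb. destruct (Hg2 b Hb) as [J [HJ1 HJ2]].
    assert (exists y, y <. X /\ J <. t y) as [y [Hy1 Hy2]].
    { apply NNPP; intro H. apply Hn. exists J. split; auto. intros y Hy.
      apply not_lt_le. intro. apply H; eauto. }
    exists y. split; auto. eapply le_trans; [exact HJ2|]. apply Hg3; auto. apply lt_le_incl; auto. }
  exact (le_not_lt (Hmin X H) HX).
Qed.

(* The level of z < g is the summand index of the image of z under an injection
   of g into mu = sum_i mu_i. *)
Lemma level_exists : exists level : L -> L -> L,
  (forall g z, z <. g -> level g z <. k) /\
  (forall g i, i <. k -> CardLe (fun z => z <. g /\ level g z <=. i) (below lt (mu i))).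
Proof.
  destruct segment_injections as [h Hh].
  destruct Hmu_sum as [_ [p [Hp1 Hp2]]].
  exists (fun g z => fst (p (h g z))). split.
  - intros g z Hz. apply (Hp1 _ (proj1 (Hh g z z Hz Hz))).
  - intros g i Hi. eapply cardle_trans; [|apply (mu_square Hi)].
    exists (fun z => p (h g z)). split.
    + intros z [Hz1 Hz2]. destruct (Hp1 _ (proj1 (Hh g z z Hz1 Hz1))) as [B C]. split.
      * exact (le_lt_trans Hz2 (lt_trans Hi (k_lt_mu Hi))).
      * eapply lt_le_trans; [exact C|]. apply mu_mono; auto.
    + intros x y [Hx _] [Hy _] E. apply (Hh g x y Hx Hy).
      apply Hp2; auto; [apply (Hh g x x Hx Hx)|apply (Hh g y y Hy Hy)].
Qed.

End SuccessorOfSingular.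

End Ordinals.

Theorem lemma2p7
  (L : Type) (lt : L -> L -> Prop) (wo : StrictWellOrder lt)
  (m k : L) (mu : L -> L)
  (* mu is a cardinal and L has order type lambda = mu^+ *)
  (Hm_card : IsCard lt m)
  (Hlam_small : forall a : L, CardLe (below lt a) (below lt m))
  (Hlam_big : ~ CardLe (fun _ : L => True) (below lt m))
  (* aleph_0 < kappa = cf(mu) < mu *)
  (Hk_cf : IsCf lt m k) (Hk_unc : Uncountable lt k) (Hk_lt : lt k m)
  (* <mu_i : i < kappa> increasing continuous sequence of cardinals, mu_0 > kappa *)
  (Hmu_card : forall i, lt i k -> IsCard lt (mu i))
  (Hmu_incr : forall i j, lt i j -> lt j k -> lt (mu i) (mu j))
  (Hmu_cont : forall j, lt j k -> IsLimit lt j ->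
      IsSup lt (mu j) (fun x => exists i, lt i j /\ x = mu i))
  (Hmu_0 : forall z, IsZero lt z -> lt k (mu z))
  (* mu = sum_{i<kappa} mu_i *)
  (Hmu_sum : CardEq (fun p : L * L => lt (fst p) k /\ lt (snd p) (mu (fst p)))
                    (below lt m)) :
  exists a : L -> L -> L -> Prop,   (* a alpha i = a^alpha_i *)
    (forall alpha i, lt i k ->
        Subset (a alpha i) (below lt alpha) /\
        CardLe (a alpha i) (below lt (mu i))) /\
    (forall alpha i j, le lt i j -> lt j k -> Subset (a alpha i) (a alpha j)) /\
    forall f : L -> L,
      let A := fun i alpha => IsSup lt alpha (fun z => a alpha i z /\ a alpha i (f z)) in
      let S := fun d => IsCf lt d k /\ ~ (exists i, lt i k /\ A i d) in
      (* (A) *)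
      (forall i j, le lt i j -> lt j k -> Subset (A i) (A j)) /\
      (* (B) *)
      NonStationaryL lt (fun d => ~ IsCf lt d k /\ ~ (exists i, lt i k /\ A i d)) /\
      (* (C) *)
      (forall g i, lt i k ->
         (exists e, IsCf lt g e /\ Uncountable lt e /\ le lt e k) ->
         Reflects lt (A i) g -> A i g) /\
      (* (C') *)
      (forall i d, lt i k -> S d -> ~ Reflects lt (A i) d) /\
      (* (D) *)
      (exists N, NonStationaryL lt N /\ InI lt k (fun d => S d /\ ~ N d)).
Proof.
  destruct (level_exists wo m mu Hlam_small Hk_unc Hmu_card Hmu_incr Hmu_0 Hmu_sum)
    as [level [Hlevel_lt Hlevel_card]].
  destruct (ladders_exist wo m) as [cf [ladder [Hcf Hladder]]].
  pose proof (k_lt_mu wo m k mu Hmu_incr Hmu_0) as Hk_mu.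
  pose proof (mu_square wo m mu Hk_unc Hmu_card Hmu_incr Hmu_0) as Hmu_sq.
  pose proof (L_bounded_segment wo m Hm_card Hlam_small Hlam_big Hk_unc Hk_lt) as Hseg.
  pose proof (L_bounded_omega wo m Hm_card Hlam_small Hlam_big Hk_unc Hk_lt) as Homega.
  pose proof (k_regular wo m Hk_cf) as Hreg.
  exists (fun alpha i z => member lt k level cf ladder i alpha z). split; [|split].
  - intros alpha i Hi. split.
    + intros z Hz. exact (member_lt wo Hz).
    + apply (member_card wo m); auto.
  - intros alpha i j Hij _ z. exact (member_mono wo Hij).
  - intros f A S. split; [|split; [|split; [|split]]].
    + intros i j Hij _ g. exact (Af_mono wo Hij).
    + apply (covered_off_cf_k wo m); auto.
    + intros g i _. apply (Af_of_reflects wo m); auto.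
    + intros i d Hi [Hd Hnot]. apply (uncovered_not_reflects wo m); auto.
    + apply (uncovered_cf_k_in_I wo m); auto.
Qed.
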